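(* Consider the problem of minimizing $\Phi(x_1,x_2):=\theta_1(x_1)+h(x_1,x_2)+\theta_2(x_2)$ with $h=h^+-h^-$, and let $\{(x_1^k,x_2^k)\}_{k\in\mathbb{N}}$ be a sequence generated by the inertial Bregman alternating linearized minimization algorithm described in the context, under Assumptions A1, A2 and A3 stated in the context (with the constants $\varepsilon,\delta_1,\delta_2$ defined there). Set $w_1^k=(x_1^k,x_2^k)$, $w_2^k=(x_1^{k-1},x_2^{k-1})$ and $\mathbf{w}^k=(w_1^k,w_2^k)$. Then the sequence $\{\Theta_{\delta_1,\delta_2}(\mathbf{w}^k)\}_{k\in\mathbb{N}}$ is nonincreasing; in particular, for all $k\in\mathbb{N}$, $$\Theta_{\delta_1,\delta_2}(\mathbf{w}^{k+1})-\Theta_{\delta_1,\delta_2}(\mathbf{w}^k)\le -\delta\,\|\mathbf{w}^{k+1}-\mathbf{w}^k\|^2,$$ where $\delta=\frac{\varepsilon}{2}\min\{\delta_1,\delta_2\}>0$.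
   Context: Let $n_1,n_2\ge 1$. Let $\theta_1:\mathbb{R}^{n_1}\to(-\infty,+\infty]$, $\theta_2:\mathbb{R}^{n_2}\to(-\infty,+\infty]$, and let $h^+,h^-:\mathbb{R}^{n_1}\times\mathbb{R}^{n_2}\to\mathbb{R}$ be continuously differentiable, $h=h^+-h^-$, $\Phi(x_1,x_2)=\theta_1(x_1)+h(x_1,x_2)+\theta_2(x_2)$. Bregman distance: for a strongly convex, continuously differentiable $\psi$, $D_\psi(x,y)=\psi(x)-\psi(y)-\langle\nabla\psi(y),x-y\rangle$. For a function $g$, $\mu>0$ and a kernel $\psi$, define $\mathcal{P}^{\psi}_{g,\mu}(u;v):=\arg\min_x\{g(x)+\langle x,v\rangle+\mu D_\psi(x,u)\}$. For each $k\in\mathbb{N}$, $\psi_k:\mathbb{R}^{n_1}\to\mathbb{R}$ and $\varphi_k:\mathbb{R}^{n_2}\to\mathbb{R}$ are strongly convex continuously differentiable kernels whose strong convexity moduli are at least $\rho_1>0$ and $\rho_2>0$ respectively (over all $k$). Algorithm: choose parameters $\alpha_i^k,\beta_i^k,\tau_i^k$ ($i=1,2$), an initial point $x^0=(x_1^0,x_2^0)$, and set $x^{-1}:=x^0$. For $k=0,1,2,\dots$: $y_1^k=x_1^k+\alpha_1^k(x_1^k-x_1^{k-1})$, $z_1^k=x_1^k+\beta_1^k(x_1^k-x_1^{k-1})$, $x_1^{k+1}\in\mathcal{P}^{\psi_k}_{\theta_1+h^+(\cdot,x_2^k),\tau_1^k}(x_1^k;t_1^k)$ with $t_1^k=-\nabla_{x_1}h^-(z_1^k,x_2^k)-\tau_1^k(y_1^k-x_1^k)$;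 $y_2^k=x_2^k+\alpha_2^k(x_2^k-x_2^{k-1})$, $z_2^k=x_2^k+\beta_2^k(x_2^k-x_2^{k-1})$, $x_2^{k+1}\in\mathcal{P}^{\varphi_k}_{\theta_2+h^+(x_1^{k+1},\cdot),\tau_2^k}(x_2^k;t_2^k)$ with $t_2^k=-\nabla_{x_2}h^-(x_1^{k+1},z_2^k)-\tau_2^k(y_2^k-x_2^k)$. Assumption A1: $\theta_1,\theta_2$ are proper lower semicontinuous, and $\Phi$ is bounded from below. Assumption A2: (i) for every fixed $x_2$, $\nabla_{x_1}h^-(\cdot,x_2)$ is globally Lipschitz with modulus $L_1^-(x_2)$; for every fixed $x_1$, $\nabla_{x_2}h^-(x_1,\cdot)$ is globally Lipschitz with modulus $L_2^-(x_1)$. (ii) There exist $\lambda_i^-,\lambda_i^+>0$ ($i=1,2$) with $\inf_k L_1^-(x_2^k)\ge\lambda_1^-$, $\inf_k L_2^-(x_1^k)\ge\lambda_2^-$, $\sup_k L_1^-(x_2^k)\le\lambda_1^+$, $\sup_k L_2^-(x_1^k)\le\lambda_2^+$. (iii) $h$ is continuously differentiable and $\nabla h=\nabla h^+-\nabla h^-$ is Lipschitz continuous on bounded subsets of $\mathbb{R}^{n_1}\times\mathbb{R}^{n_2}$. Assumption A3: for a fixed $\varepsilon>0$: (i) there exist $0<\bar\alpha_i<\frac{(1-\varepsilon)\rho_i}{2}$ with $\alpha_i^k\in[0,\bar\alpha_i]$, and $\bar\beta_i>0$ with $\beta_i^k\in[0,\bar\beta_i]$, $i=1,2$, for all $k$;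 (ii) $\tau_1^k=\frac{(1+\varepsilon)\delta_1+(1+\beta_1^k)L_1^-(x_2^k)}{\rho_1-\alpha_1^k}$, $\tau_2^k=\frac{(1+\varepsilon)\delta_2+(1+\beta_2^k)L_2^-(x_1^{k+1})}{\rho_2-\alpha_2^k}$, where $\delta_1=\frac{\bar\alpha_1+\bar\beta_1\rho_1}{(1-\varepsilon)\rho_1-2\bar\alpha_1}\lambda_1^+$ and $\delta_2=\frac{\bar\alpha_2+\bar\beta_2\rho_2}{(1-\varepsilon)\rho_2-2\bar\alpha_2}\lambda_2^+$. Auxiliary function: for $\mathbf{w}=(w_1,w_2)$ with $w_1=(w_{11},w_{12}),w_2=(w_{21},w_{22})\in\mathbb{R}^{n_1}\times\mathbb{R}^{n_2}$, $\Theta_{\delta_1,\delta_2}(\mathbf{w}):=\Phi(w_1)+\frac{\delta_1}{2}\|w_{11}-w_{21}\|^2+\frac{\delta_2}{2}\|w_{12}-w_{22}\|^2$. *)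

From HB Require Import structures.
From mathcomp Require Import all_boot all_order all_algebra.
From mathcomp Require Import all_classical all_reals all_analysis.
Set Implicit Arguments. Unset Strict Implicit. Unset Printing Implicit Defensive.
Import Order.TTheory GRing.Theory Num.Theory.
Import numFieldNormedType.Exports.
Local Open Scope ring_scope.

Section Defs.
Variable R : realType.

Definition dotv n (u v : 'rV[R]_n) : R := \sum_(i < n) u 0 i * v 0 i.
Definition sqn n (u : 'rV[R]_n) : R := dotv u u.
Definition enorm n (u : 'rV[R]_n) : R := Num.sqrt (sqn u).

Definition is_gradient n (f : 'rV[R]_n -> R) (g : 'rV[R]_n -> 'rV[R]_n) :=
  forall x, differentiable f x /\ forall v, 'D_v f x = dotv (g x) v.

Definition C1_grad n (f : 'rV[R]_n -> R) (g : 'rV[R]_n -> 'rV[R]_n) :=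
  is_gradient f g /\ continuous g.

Definition is_gradient2 n1 n2 (h : 'rV[R]_n1 -> 'rV[R]_n2 -> R)
  (g1 : 'rV[R]_n1 -> 'rV[R]_n2 -> 'rV[R]_n1)
  (g2 : 'rV[R]_n1 -> 'rV[R]_n2 -> 'rV[R]_n2) :=
  forall p : 'rV[R]_n1 * 'rV[R]_n2,
    differentiable (fun q : 'rV[R]_n1 * 'rV[R]_n2 => h q.1 q.2) p /\
    forall v : 'rV[R]_n1 * 'rV[R]_n2,
      'D_v (fun q : 'rV[R]_n1 * 'rV[R]_n2 => h q.1 q.2) p
        = dotv (g1 p.1 p.2) v.1 + dotv (g2 p.1 p.2) v.2.

Definition C1_grad2 n1 n2 (h : 'rV[R]_n1 -> 'rV[R]_n2 -> R) g1 g2 :=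
  @is_gradient2 n1 n2 h g1 g2 /\
  continuous (fun p : 'rV[R]_n1 * 'rV[R]_n2 => (g1 p.1 p.2, g2 p.1 p.2)).

Definition strongly_convex n (s : R) (psi : 'rV[R]_n -> R) :=
  forall (x y : 'rV[R]_n) (l : R), 0 <= l <= 1 ->
    psi (l *: x + (1 - l) *: y)
      <= l * psi x + (1 - l) * psi y - s / 2 * l * (1 - l) * sqn (x - y).

Definition bregman n (psi : 'rV[R]_n -> R) (dpsi : 'rV[R]_n -> 'rV[R]_n)
  (x y : 'rV[R]_n) : R :=
  psi x - psi y - dotv (dpsi y) (x - y).

Definition is_argmin n (F : 'rV[R]_n -> \bar R) (x : 'rV[R]_n) :=
  forall y, (F x <= F y)%E.

Definition proper_fun n (f : 'rV[R]_n -> \bar R) :=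
  (forall x, f x != -oo%E) /\ exists x, f x \is a fin_num.

Definition Phi n1 n2 (theta1 : 'rV[R]_n1 -> \bar R) (theta2 : 'rV[R]_n2 -> \bar R)
  (h : 'rV[R]_n1 -> 'rV[R]_n2 -> R) (x1 : 'rV[R]_n1) (x2 : 'rV[R]_n2) : \bar R :=
  (theta1 x1 + (h x1 x2)%:E + theta2 x2)%E.

(* Theta_{d1,d2}(w) with w = ((w11,w12),(w21,w22)) *)
Definition Theta n1 n2 theta1 theta2 h (d1 d2 : R)
  (w11 : 'rV[R]_n1) (w12 : 'rV[R]_n2) (w21 : 'rV[R]_n1) (w22 : 'rV[R]_n2) : \bar R :=
  (@Phi n1 n2 theta1 theta2 h w11 w12
    + (d1 / 2 * sqn (w11 - w21) + d2 / 2 * sqn (w12 - w22))%:E)%E.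

Definition delta_const (eps abar bbar rho lam : R) : R :=
  (abar + bbar * rho) / ((1 - eps) * rho - 2 * abar) * lam.

End Defs.

(* Each block update is a linearized Bregman proximal step.  For block i, the
   descent lemma for h^- at x_i^k, Young's inequality for the two errors made by
   evaluating grad h^- at the extrapolated point z_i^k and by the inertial shift
   tau_i^k (y_i^k - x_i^k), and the bound D >= rho_i/2 |.|^2 coming from strong
   convexity of the kernel combine with the minimality of x_i^{k+1} into
     Phi(new block) + (1+eps) delta_i/2 |x_i^{k+1} - x_i^k|^2
       <= Phi(old block) + (1-eps) delta_i/2 |x_i^k - x_i^{k-1}|^2.
   The value of delta_i in A3 is exactly what lets the inertial errors fit into
   the right-hand side.  Summing the two blocks and moving the |x^k - x^{k-1}|^2
   terms into Theta leaves the decrease eps/2 (delta_1 |.|^2 + delta_2 |.|^2).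
   Only real quantities are ever moved across inequalities in \bar R, so no case
   split on the finiteness of theta_i is needed. *)

From HB Require Import structures.
From mathcomp Require Import all_boot all_order all_algebra.
From mathcomp Require Import all_classical all_reals all_analysis.
From mathcomp Require Import ring lra.
Import Order.TTheory GRing.Theory Num.Theory.
Import numFieldNormedType.Exports.
Set Implicit Arguments. Unset Strict Implicit. Unset Printing Implicit Defensive.
Local Open Scope classical_set_scope.
Local Open Scope ring_scope.

Section InnerProduct.
Variables (R : realType) (n : nat).
Implicit Types u v w d e : 'rV[R]_n.

Lemma dotvC u v : dotv u v = dotv v u.
Proof. by apply: eq_bigr => i _; rewrite mulrC. Qed.

Lemma dotvDl u v w : dotv (u + v) w = dotv u w + dotv v w.
Proof. by rewrite /dotv -big_split; apply: eq_bigr => i _; rewrite mxE mulrDl. Qed.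

Lemma dotvZl a u w : dotv (a *: u) w = a * dotv u w.
Proof. by rewrite /dotv mulr_sumr; apply: eq_bigr => i _; rewrite mxE mulrA. Qed.

Lemma dotvNl u w : dotv (- u) w = - dotv u w.
Proof. by rewrite -scaleN1r dotvZl mulN1r. Qed.

Lemma dotvBl u v w : dotv (u - v) w = dotv u w - dotv v w.
Proof. by rewrite dotvDl dotvNl. Qed.

Lemma dotvZr a u w : dotv w (a *: u) = a * dotv w u.
Proof. by rewrite dotvC dotvZl dotvC. Qed.

Lemma dotvNr u w : dotv w (- u) = - dotv w u.
Proof. by rewrite dotvC dotvNl dotvC. Qed.

Lemma dotvBr u v w : dotv w (u - v) = dotv w u - dotv w v.
Proof. by rewrite dotvC dotvBl !(dotvC w). Qed.

Lemma dotv0r u : dotv u 0 = 0.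
Proof. by rewrite /dotv big1 // => i _; rewrite mxE mulr0. Qed.

Lemma sqn_ge0 u : 0 <= sqn u.
Proof. by rewrite sumr_ge0 // => i _; rewrite -expr2 sqr_ge0. Qed.

Lemma sqnB u v : sqn (u - v) = sqn u - 2 * dotv u v + sqn v.
Proof. rewrite /sqn dotvBl !dotvBr (dotvC v u); lra. Qed.

Lemma sqnZ a u : sqn (a *: u) = a ^+ 2 * sqn u.
Proof. by rewrite /sqn dotvZl dotvZr mulrA expr2. Qed.

Lemma sqnN u : sqn (- u) = sqn u.
Proof. by rewrite /sqn dotvNl dotvNr opprK. Qed.

Lemma sqn_le0 u : sqn u <= 0 -> u = 0.
Proof.
move=> u_le0; apply/rowP => i; rewrite mxE; apply/eqP.
have : sqn u == 0 by rewrite eq_le u_le0 sqn_ge0.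
rewrite psumr_eq0 => [/allP /(_ i (mem_index_enum i)) /=|j _]; last first.
  by rewrite -expr2 sqr_ge0.
by rewrite mulf_eq0 orbb.
Qed.

Lemma young_dotv d D e m : 0 <= m -> sqn D <= m ^+ 2 * sqn e ->
  2 * dotv d D <= m * (sqn d + sqn e).
Proof.
move=> m_ge0 De; have [m0|m_neq0] := eqVneq m 0.
  move: De; rewrite m0 expr0n mul0r => /sqn_le0 ->.
  by rewrite dotv0r mul0r mulr0.
have m_gt0 : 0 < m by rewrite lt_def m_neq0.
rewrite -(ler_pM2l m_gt0).
have := sqn_ge0 (m *: d - D); rewrite sqnB sqnZ dotvZl; nra.
Qed.

Lemma sqn_le_from_enorm u v c : 0 <= c -> enorm u <= c * enorm v ->
  sqn u <= c ^+ 2 * sqn v.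
Proof.
move=> c_ge0 uv; rewrite -(sqr_sqrtr (sqn_ge0 u)) -(sqr_sqrtr (sqn_ge0 v)) -exprMn.
by rewrite lerXn2r // nnegrE ?sqrtr_ge0 // mulr_ge0 // sqrtr_ge0.
Qed.

End InnerProduct.

Lemma lee_EFin_shift (R : realDomainType) (a b : \bar R) (u v w z : R) :
  (a + u%:E <= b + v%:E)%E -> w + v <= z + u -> (a + w%:E <= b + z%:E)%E.
Proof.
move=> ab wz; have -> : w = u + (w - u) by rewrite addrC subrK.
rewrite EFinD addeA; apply: le_trans (leeD2r _ ab) _.
by rewrite -addeA -EFinD; apply: leeD2l; rewrite lee_fin; lra.
Qed.

Lemma leeD_EFin (R : realDomainType) (a1 a2 b1 b2 : \bar R) (u1 u2 v1 v2 : R) :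
  (a1 + u1%:E <= b1 + v1%:E)%E -> (a2 + u2%:E <= b2 + v2%:E)%E ->
  (a1 + a2 + (u1 + u2)%:E <= b1 + b2 + (v1 + v2)%:E)%E.
Proof. by move=> le1 le2; rewrite !EFinD (addeACA a1) (addeACA b1); exact: leeD. Qed.

Lemma mulr_min_le (R : realDomainType) (c d1 d2 u1 u2 : R) :
  0 <= c -> 0 <= u1 -> 0 <= u2 ->
  c * Num.min d1 d2 * (u1 + u2) <= c * (d1 * u1 + d2 * u2).
Proof.
move=> c_ge0 u1_ge0 u2_ge0; rewrite -mulrA ler_wpM2l // mulrDr.
by rewrite lerD // ler_wpM2r // ge_min lexx ?orbT.
Qed.

Definition gateaux_gradient {R : realType} {n} (f : 'rV[R]_n -> R)
    (g : 'rV[R]_n -> 'rV[R]_n) :=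
  forall x v, derivable f x v /\ 'D_v f x = dotv (g x) v.

Lemma is_gradient_gateaux (R : realType) n (f : 'rV[R]_n -> R) g :
  is_gradient f g -> gateaux_gradient f g.
Proof. by move=> fg x v; have [/diff_derivable ? ?] := fg x. Qed.

Section PartialGradients.
Variables (R : realType) (n1 n2 : nat) (h : 'rV[R]_n1 -> 'rV[R]_n2 -> R).
Variables (g1 : 'rV[R]_n1 -> 'rV[R]_n2 -> 'rV[R]_n1).
Variables (g2 : 'rV[R]_n1 -> 'rV[R]_n2 -> 'rV[R]_n2).
Hypothesis hg : is_gradient2 h g1 g2.
Let H (q : 'rV[R]_n1 * 'rV[R]_n2) := h q.1 q.2.

Lemma is_gradient2_gateaux1 b : gateaux_gradient (h^~ b) (g1^~ b).
Proof.
move=> u v; have [dH DH] := hg (u, b).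
have E : (fun t : R => t^-1 *: ((h^~ b \o shift u) (t *: v) - h u b)) =
          (fun t : R => t^-1 *: ((H \o shift (u, b)) (t *: (v, 0)) - H (u, b))).
  by apply/funext => t; rewrite /H /= scaler0 add0r.
split; first by rewrite /derivable E; exact: diff_derivable.
by rewrite /derive E -/(derive H (u, b) (v, 0)) DH /= dotv0r addr0.
Qed.

Lemma is_gradient2_gateaux2 a : gateaux_gradient (h a) (g2 a).
Proof.
move=> u v; have [dH DH] := hg (a, u).
have E : (fun t : R => t^-1 *: ((h a \o shift u) (t *: v) - h a u)) =
          (fun t : R => t^-1 *: ((H \o shift (a, u)) (t *: (0, v)) - H (a, u))).
  by apply/funext => t; rewrite /H /= scaler0 add0r.
split; first by rewrite /derivable E; exact: diff_derivable.
by rewrite /derive E -/(derive H (a, u) (0, v)) DH /= dotv0r add0r.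
Qed.

End PartialGradients.

Section LipschitzGradient.
Variables (R : realType) (n : nat) (M : 'rV[R]_n -> R) (gM : 'rV[R]_n -> 'rV[R]_n).
Hypothesis MgM : gateaux_gradient M gM.

Lemma is_derive_along_line (a d : 'rV[R]_n) (t : R) :
  is_derive t 1 (fun s : R => M (s *: d + a)) (dotv (gM (t *: d + a)) d).
Proof.
have E : (fun h : R => h^-1 *: (((fun s => M (s *: d + a)) \o shift t) (h *: 1)
                                 - M (t *: d + a))) =
         (fun h => h^-1 *: ((M \o shift (t *: d + a)) (h *: d) - M (t *: d + a))).
  apply/funext => h /=; congr (_ *: (M _ - _)).
  change ((h * 1 + t) *: d + a = h *: d + (t *: d + a)).
  by rewrite mulr1 scalerDl addrA.
have [dM DM] := MgM (t *: d + a) d.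
by apply: DeriveDef; [rewrite /derivable E | rewrite /derive E].
Qed.

Variable L : R.
Hypotheses (L_ge0 : 0 <= L)
  (gM_lipschitz : forall u w, enorm (gM u - gM w) <= L * enorm (u - w)).

Lemma lipschitz_gradient_lower_bound (a b : 'rV[R]_n) :
  M a + dotv (gM a) (b - a) - L / 2 * sqn (b - a) <= M b.
Proof.
set d := b - a; set c := dotv (gM a) d; set k := L / 2 * sqn d.
pose g : R -> R := (fun s : R => M (s *: d + a)) - c \*: id + k \*: (id * id).
have g_deriv (t : R) : is_derive t 1 g (dotv (gM (t *: d + a)) d - c + k * (2 * t)).
  have line_deriv := is_derive_along_line a d t; apply: is_derive_eq.
  by change (dotv (gM (t *: d + a)) d - c * 1 + k * (t * 1 + t * 1)
    = dotv (gM (t *: d + a)) d - c + k * (2 * t)); ring.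
have g_deriv_ge0 (t : R) : 0 < t -> 0 <= dotv (gM (t *: d + a)) d - c + k * (2 * t).
  move=> t_gt0; rewrite -(pmulr_rge0 _ t_gt0).
  have gM_near : sqn (gM (t *: d + a) - gM a) <= L ^+ 2 * sqn (t *: d).
    apply: sqn_le_from_enorm => //.
    by have := gM_lipschitz (t *: d + a) a; rewrite addrK.
  have := young_dotv (- (t *: d)) L_ge0 gM_near.
  rewrite dotvNl dotvZl sqnN sqnZ dotvC (dotvBl (gM _)) -/c /k; nra.
have : g 0 <= g 1.
  apply: (@ger0_derive1_ndecr _ g 0 1) => // [t|].
  - rewrite in_itv /= derive1E (@derive_val _ _ _ _ _ _ _ (g_deriv t)).
    by move=> /andP[/g_deriv_ge0].
  - apply: derivable_within_continuous => t _.
    exact: (@ex_derive _ _ _ _ _ _ _ (g_deriv t)).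
change (M (0 *: d + a) - c * 0 + k * (0 * 0)
        <= M (1 *: d + a) - c * 1 + k * (1 * 1) -> M a + c - k <= M b).
rewrite scale0r add0r scale1r /d subrK; lra.
Qed.

End LipschitzGradient.

(* Divide the strong convexity inequality along [y, x] by h and let h -> 0+. *)
Lemma strongly_convex_bregman_ge (R : realType) n (psi : 'rV[R]_n -> R) dpsi s
    (x y : 'rV[R]_n) :
  gateaux_gradient psi dpsi -> strongly_convex s psi ->
  s / 2 * sqn (x - y) <= bregman psi dpsi x y.
Proof.
move=> psi_grad psi_sc; have [dv Dv] := psi_grad y (x - y).
rewrite /bregman -Dv; set v := x - y; set c := s / 2 * sqn v.
set q := fun h : R => h^-1 *: ((psi \o shift y) (h *: v) - psi y).
have q_bound : \forall h \near 0^'+, q h - c * h <= psi x - psi y - c.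
  near=> h.
  have h_gt0 : 0 < h by near: h; exact: nbhs_right_gt.
  have h_le1 : h <= 1 by near: h; exact: nbhs_right_le.
  have := psi_sc x y h; rewrite (ltW h_gt0) h_le1 => /(_ isT).
  have -> : h *: x + (1 - h) *: y = h *: v + y.
    by rewrite /v scalerBr scalerBl scale1r addrA addrAC.
  rewrite /q /= lerBlDr -/v => convex_h.
  change (h^-1 * (psi (h *: v + y) - psi y) <= psi x - psi y - c + c * h).
  rewrite mulrC ler_pdivrMr // /c.
  by move: convex_h; set P := psi _; set V := sqn v; lra.
have q_cvg : (fun h => q h - c * h) @ 0^'+ --> 'D_v psi y - c * 0.
  apply: cvgB; first exact: cvg_dnbhs_at_right.
  by apply: cvg_at_right_filter; apply: cvgM; [exact: cvg_cst | exact: cvg_id].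
have := limr_le (cvgP _ q_cvg) q_bound.
rewrite (cvg_lim _ q_cvg) // mulr0 subr0 => /(_ (at_right_proper_filter 0)); lra.
Unshelve. all: by end_near.
Qed.

Lemma delta_const_gt0 (R : realType) (eps abar bbar rho lam : R) :
  0 < eps -> 0 < abar -> abar < (1 - eps) * rho / 2 -> 0 < bbar -> 0 < rho ->
  0 < lam -> 0 < delta_const eps abar bbar rho lam.
Proof.
move=> eps_gt0 abar_gt0 abar_lt bbar_gt0 rho_gt0 lam_gt0.
rewrite /delta_const mulr_gt0 // divr_gt0 //; last lra.
by rewrite addr_gt0 // mulr_gt0.
Qed.

Lemma stepsize_bounds (R : realType) (eps abar bbar rho lam L alpha beta del tau : R) :
  0 < eps -> 0 < abar -> abar < (1 - eps) * rho / 2 -> 0 < bbar -> 0 < rho ->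
  0 < lam -> 0 <= alpha <= abar -> 0 <= beta <= bbar -> 0 <= L <= lam ->
  del = delta_const eps abar bbar rho lam ->
  tau = ((1 + eps) * del + (1 + beta) * L) / (rho - alpha) ->
  [/\ 0 <= tau, tau * (rho - alpha) = (1 + eps) * del + (1 + beta) * L
    & L * beta + tau * alpha <= (1 - eps) * del].
Proof.
move=> eps_gt0 abar_gt0 abar_lt bbar_gt0 rho_gt0 lam_gt0 /andP[alpha_ge0 alpha_le]
  /andP[beta_ge0 beta_le] /andP[L_ge0 L_le] del_def tau_def.
have eps_rho_gt0 : 0 < eps * rho by exact: mulr_gt0.
have rho_alpha_gt0 : 0 < rho - alpha by lra.
have del_gt0 : 0 < del by rewrite del_def delta_const_gt0.
have tau_mul : tau * (rho - alpha) = (1 + eps) * del + (1 + beta) * L.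
  by rewrite tau_def mulfVK // gt_eqF.
split => //.
  by rewrite tau_def divr_ge0 ?(ltW rho_alpha_gt0) //; nra.
have del_mul : del * ((1 - eps) * rho - 2 * abar) = (abar + bbar * rho) * lam.
  by rewrite del_def /delta_const mulrAC mulfVK // gt_eqF //; lra.
rewrite -(ler_pM2r rho_alpha_gt0) mulrDl [tau * _ * _]mulrAC tau_mul.
have beta_rho : beta * rho <= bbar * rho by rewrite ler_pM2r.
have : (alpha + beta * rho) * L <= (abar + bbar * rho) * lam by apply: ler_pM; nra.
nra.
Qed.

Section InertialBlockStep.
Variables (R : realType) (n : nat).
Variables (M : 'rV[R]_n -> R) (gM : 'rV[R]_n -> 'rV[R]_n).
Variables (ps : 'rV[R]_n -> R) (dps : 'rV[R]_n -> 'rV[R]_n).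
Variables (s rho L lam eps abar bbar alpha beta del tau : R).
Hypotheses (MgM : gateaux_gradient M gM)
  (gM_lipschitz : forall u w, enorm (gM u - gM w) <= L * enorm (u - w))
  (ps_grad : gateaux_gradient ps dps) (ps_sc : strongly_convex s ps) (rho_le_s : rho <= s).
Hypotheses (eps_gt0 : 0 < eps) (abar_gt0 : 0 < abar)
  (abar_lt : abar < (1 - eps) * rho / 2) (bbar_gt0 : 0 < bbar) (rho_gt0 : 0 < rho)
  (lam_gt0 : 0 < lam) (alpha_bnd : 0 <= alpha <= abar) (beta_bnd : 0 <= beta <= bbar)
  (L_bnd : 0 <= L <= lam) (del_def : del = delta_const eps abar bbar rho lam)
  (tau_def : tau = ((1 + eps) * del + (1 + beta) * L) / (rho - alpha)).

Lemma inertial_block_estimate (xm x xp : 'rV[R]_n) :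
  M x - M xp + (1 + eps) * del / 2 * sqn (xp - x)
    <= (1 - eps) * del / 2 * sqn (x - xm)
       + dotv (xp - x) (- gM (x + beta *: (x - xm)) - tau *: (x + alpha *: (x - xm) - x))
       + tau * bregman ps dps xp x.
Proof.
set t := (- _ - _); set d := xp - x; set e := x - xm.
have [tau_ge0 tau_mul inertia_le] := stepsize_bounds eps_gt0 abar_gt0 abar_lt bbar_gt0
  rho_gt0 lam_gt0 alpha_bnd beta_bnd L_bnd del_def tau_def.
move: alpha_bnd beta_bnd L_bnd => /andP[alpha_ge0 _] /andP[beta_ge0 _] /andP[L_ge0 _].
have t_dot : dotv d t = - dotv d (gM (x + beta *: e)) - tau * alpha * dotv d e.
  by rewrite /t [x + _ - x]addrAC subrr add0r dotvBr dotvNr !dotvZr mulrA.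
have descent := lipschitz_gradient_lower_bound MgM L_ge0 gM_lipschitz x xp.
have breg : rho / 2 * sqn d <= bregman ps dps xp x.
  apply: le_trans (strongly_convex_bregman_ge xp x ps_grad ps_sc).
  by rewrite ler_wpM2r ?sqn_ge0 // ler_pM2r.
have gM_inertia : sqn (gM (x + beta *: e) - gM x) <= (L * beta) ^+ 2 * sqn e.
  rewrite exprMn -mulrA -sqnZ; apply: sqn_le_from_enorm => //.
  by have := gM_lipschitz (x + beta *: e) x; rewrite addrAC subrr add0r.
have young1 := young_dotv d (mulr_ge0 L_ge0 beta_ge0) gM_inertia.
have young2 : 2 * dotv d e <= sqn d + sqn e.
  by have := sqn_ge0 (d - e); rewrite sqnB; lra.
rewrite dotvBr in young1; rewrite -/d dotvC in descent; rewrite t_dot.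
have := ler_wpM2l tau_ge0 breg.
have := ler_wpM2l (mulr_ge0 tau_ge0 alpha_ge0) young2.
have := ler_wpM2r (sqn_ge0 e) inertia_le.
have : tau * (rho - alpha) * sqn d = ((1 + eps) * del + (1 + beta) * L) * sqn d.
  by rewrite tau_mul.
lra.
Qed.

Lemma inertial_block_descent (theta : 'rV[R]_n -> \bar R) (P : 'rV[R]_n -> R)
    (xm x xp : 'rV[R]_n) :
  is_argmin (fun u => (theta u + (P u
     + dotv u (- gM (x + beta *: (x - xm)) - tau *: (x + alpha *: (x - xm) - x))
     + tau * bregman ps dps u x)%:E)%E) xp ->
  (theta xp + (P xp - M xp - (P x - M x) + (1 + eps) * del / 2 * sqn (xp - x))%:E
     <= theta x + ((1 - eps) * del / 2 * sqn (x - xm))%:E)%E.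
Proof.
move=> /(_ x) xp_min; apply: lee_EFin_shift xp_min _.
have := inertial_block_estimate xm x xp.
rewrite /bregman [x - x]subrr dotv0r dotvBl; lra.
Qed.

End InertialBlockStep.

Lemma ThetaE (R : realType) n1 n2 (theta1 : 'rV[R]_n1 -> \bar R)
    (theta2 : 'rV[R]_n2 -> \bar R) h d1 d2 w11 w12 w21 w22 :
  Theta theta1 theta2 h d1 d2 w11 w12 w21 w22 =
  (theta1 w11 + theta2 w12
   + (h w11 w12 + (d1 / 2 * sqn (w11 - w21) + d2 / 2 * sqn (w12 - w22)))%:E)%E.
Proof. by rewrite /Theta /Phi (addeAC (theta1 w11)) [in RHS]EFinD addeA. Qed.

Lemma Theta_descent (R : realType) n1 n2 (theta1 : 'rV[R]_n1 -> \bar R)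
    (theta2 : 'rV[R]_n2 -> \bar R) h (eps d1 d2 : R) (a0 a1 a2 : 'rV[R]_n1)
    (b0 b1 b2 : 'rV[R]_n2) :
  (theta1 a2 + (h a2 b1 - h a1 b1 + (1 + eps) * d1 / 2 * sqn (a2 - a1))%:E
     <= theta1 a1 + ((1 - eps) * d1 / 2 * sqn (a1 - a0))%:E)%E ->
  (theta2 b2 + (h a2 b2 - h a2 b1 + (1 + eps) * d2 / 2 * sqn (b2 - b1))%:E
     <= theta2 b1 + ((1 - eps) * d2 / 2 * sqn (b1 - b0))%:E)%E ->
  (Theta theta1 theta2 h d1 d2 a2 b2 a1 b1
   + (eps / 2 * (d1 * (sqn (a2 - a1) + sqn (a1 - a0))
                 + d2 * (sqn (b2 - b1) + sqn (b1 - b0))))%:E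
     <= Theta theta1 theta2 h d1 d2 a1 b1 a0 b0)%E.
Proof.
move=> step1 step2; rewrite !ThetaE -addeA -EFinD.
by apply: lee_EFin_shift (leeD_EFin step1 step2) _; lra.
Qed.

Theorem lemma1 (R : realType) (n1 n2 : nat)
  (theta1 : 'rV[R]_n1 -> \bar R) (theta2 : 'rV[R]_n2 -> \bar R)
  (hp hm : 'rV[R]_n1 -> 'rV[R]_n2 -> R)
  (gp1 gm1 : 'rV[R]_n1 -> 'rV[R]_n2 -> 'rV[R]_n1)
  (gp2 gm2 : 'rV[R]_n1 -> 'rV[R]_n2 -> 'rV[R]_n2)
  (psi : nat -> 'rV[R]_n1 -> R) (dpsi : nat -> 'rV[R]_n1 -> 'rV[R]_n1)
  (phi : nat -> 'rV[R]_n2 -> R) (dphi : nat -> 'rV[R]_n2 -> 'rV[R]_n2)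
  (rho1 rho2 : R)
  (L1m : 'rV[R]_n2 -> R) (L2m : 'rV[R]_n1 -> R)
  (lam1m lam1p lam2m lam2p : R)
  (eps abar1 abar2 bbar1 bbar2 : R)
  (alpha1 alpha2 beta1 beta2 tau1 tau2 : nat -> R)
  (x1 : nat -> 'rV[R]_n1) (x2 : nat -> 'rV[R]_n2) :
  (* n1, n2 >= 1 *)
  (0 < n1)%N -> (0 < n2)%N ->
  (* h^+, h^- continuously differentiable, with partial gradients gp*, gm* *)
  C1_grad2 hp gp1 gp2 -> C1_grad2 hm gm1 gm2 ->
  (* kernels: C^1, strongly convex with modulus at least rho_i *)
  0 < rho1 -> 0 < rho2 ->
  (forall k, C1_grad (psi k) (dpsi k)) ->
  (forall k, C1_grad (phi k) (dphi k)) ->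
  (forall k, exists s, rho1 <= s /\ strongly_convex s (psi k)) ->
  (forall k, exists s, rho2 <= s /\ strongly_convex s (phi k)) ->
  (* Assumption A1 *)
  proper_fun theta1 -> proper_fun theta2 ->
  lower_semicontinuous theta1 -> lower_semicontinuous theta2 ->
  (exists m : R, forall y1 y2, (m%:E <= Phi theta1 theta2 (fun a b => (hp a b - hm a b)%R) y1 y2)%E) ->
  (* Assumption A2 (i) *)
  (forall y2 a b, enorm (gm1 a y2 - gm1 b y2) <= L1m y2 * enorm (a - b)) ->
  (forall y1 a b, enorm (gm2 y1 a - gm2 y1 b) <= L2m y1 * enorm (a - b)) ->
  (* Assumption A2 (ii) *)
  0 < lam1m -> 0 < lam1p -> 0 < lam2m -> 0 < lam2p ->
  (forall k, lam1m <= L1m (x2 k) <= lam1p) ->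
  (forall k, lam2m <= L2m (x1 k) <= lam2p) ->
  (* Assumption A2 (iii): grad h Lipschitz on bounded sets *)
  (forall M : R, exists L : R, forall a1 a2 b1 b2,
     enorm a1 <= M -> enorm a2 <= M -> enorm b1 <= M -> enorm b2 <= M ->
     Num.sqrt (sqn ((gp1 a1 a2 - gm1 a1 a2) - (gp1 b1 b2 - gm1 b1 b2))
             + sqn ((gp2 a1 a2 - gm2 a1 a2) - (gp2 b1 b2 - gm2 b1 b2)))
       <= L * Num.sqrt (sqn (a1 - b1) + sqn (a2 - b2))) ->
  (* Assumption A3 *)
  0 < eps ->
  0 < abar1 -> abar1 < (1 - eps) * rho1 / 2 ->
  0 < abar2 -> abar2 < (1 - eps) * rho2 / 2 ->
  0 < bbar1 -> 0 < bbar2 ->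
  (forall k, 0 <= alpha1 k <= abar1) -> (forall k, 0 <= alpha2 k <= abar2) ->
  (forall k, 0 <= beta1 k <= bbar1) -> (forall k, 0 <= beta2 k <= bbar2) ->
  (forall k, tau1 k = ((1 + eps) * delta_const eps abar1 bbar1 rho1 lam1p
                       + (1 + beta1 k) * L1m (x2 k)) / (rho1 - alpha1 k)) ->
  (forall k, tau2 k = ((1 + eps) * delta_const eps abar2 bbar2 rho2 lam2p
                       + (1 + beta2 k) * L2m (x1 k.+1)) / (rho2 - alpha2 k)) ->
  (* the algorithm (x^{-1} := x^0, encoded by k.-1 with 0.-1 = 0) *)
  (forall k,
     let y1 := x1 k + alpha1 k *: (x1 k - x1 k.-1) in
     let z1 := x1 k + beta1 k *: (x1 k - x1 k.-1) in
     let t1 := - gm1 z1 (x2 k) - tau1 k *: (y1 - x1 k) in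
     is_argmin (fun u => (theta1 u + (hp u (x2 k) + dotv u t1
                          + tau1 k * bregman (psi k) (dpsi k) u (x1 k))%:E)%E)
               (x1 k.+1)) ->
  (forall k,
     let y2 := x2 k + alpha2 k *: (x2 k - x2 k.-1) in
     let z2 := x2 k + beta2 k *: (x2 k - x2 k.-1) in
     let t2 := - gm2 (x1 k.+1) z2 - tau2 k *: (y2 - x2 k) in
     is_argmin (fun u => (theta2 u + (hp (x1 k.+1) u + dotv u t2
                          + tau2 k * bregman (phi k) (dphi k) u (x2 k))%:E)%E)
               (x2 k.+1)) ->
  let d1 := delta_const eps abar1 bbar1 rho1 lam1p in
  let d2 := delta_const eps abar2 bbar2 rho2 lam2p in
  let h := fun a b => hp a b - hm a b in
  let Th := fun k => Theta theta1 theta2 h d1 d2 (x1 k) (x2 k) (x1 k.-1) (x2 k.-1) in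
  let delta := eps / 2 * Num.min d1 d2 in
  0 < delta /\
  (forall k, (Th k.+1 <= Th k)%E) /\
  (forall k, (Th k.+1 + (delta * (sqn (x1 k.+1 - x1 k) + sqn (x2 k.+1 - x2 k)
                         + sqn (x1 k - x1 k.-1) + sqn (x2 k - x2 k.-1)))%:E
              <= Th k)%E).
Proof.
move=> _ _ _ [hm_grad _] rho1_gt0 rho2_gt0 psi_C1 phi_C1 psi_sc phi_sc _ _ _ _ _
  gm1_lip gm2_lip lam1m_gt0 lam1p_gt0 lam2m_gt0 lam2p_gt0 L1_bnd L2_bnd _ eps_gt0
  abar1_gt0 abar1_lt abar2_gt0 abar2_lt bbar1_gt0 bbar2_gt0 alpha1_bnd alpha2_bnd
  beta1_bnd beta2_bnd tau1_def tau2_def x1_step x2_step d1 d2 h Th delta.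
have delta_gt0 : 0 < delta.
  by rewrite mulr_gt0 ?divr_gt0 // lt_min !delta_const_gt0.
have L_ge0 (l l' y : R) : 0 < l -> l <= y <= l' -> 0 <= y <= l'.
  by move=> l_gt0 /andP[ly ->]; rewrite (le_trans (ltW l_gt0) ly).
have Th_descent k : (Th k.+1 + (delta * (sqn (x1 k.+1 - x1 k) + sqn (x2 k.+1 - x2 k)
                         + sqn (x1 k - x1 k.-1) + sqn (x2 k - x2 k.-1)))%:E <= Th k)%E.
  have [[s1 [rho1_le psi_sc_k]] [s2 [rho2_le phi_sc_k]]] := (psi_sc k, phi_sc k).
  have step1 := inertial_block_descent (is_gradient2_gateaux1 hm_grad (x2 k))
    (gm1_lip (x2 k)) (is_gradient_gateaux (proj1 (psi_C1 k))) psi_sc_k rho1_le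
    eps_gt0 abar1_gt0 abar1_lt bbar1_gt0 rho1_gt0 lam1p_gt0 (alpha1_bnd k) (beta1_bnd k)
    (L_ge0 _ _ _ lam1m_gt0 (L1_bnd k)) erefl (tau1_def k) (x1_step k).
  have step2 := inertial_block_descent (is_gradient2_gateaux2 hm_grad (x1 k.+1))
    (gm2_lip (x1 k.+1)) (is_gradient_gateaux (proj1 (phi_C1 k))) phi_sc_k rho2_le
    eps_gt0 abar2_gt0 abar2_lt bbar2_gt0 rho2_gt0 lam2p_gt0 (alpha2_bnd k) (beta2_bnd k)
    (L_ge0 _ _ _ lam2m_gt0 (L2_bnd k.+1)) erefl (tau2_def k) (x2_step k).
  apply: le_trans (Theta_descent step1 step2); rewrite leeD2l // lee_fin.
  have sqn_sum_ge0 n (u v w : 'rV[R]_n) : 0 <= sqn (u - v) + sqn (v - w).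
    by rewrite addr_ge0 ?sqn_ge0.
  have := mulr_min_le d1 d2 (divr_ge0 (ltW eps_gt0) (ler0n _ 2))
    (sqn_sum_ge0 _ (x1 k.+1) (x1 k) (x1 k.-1)) (sqn_sum_ge0 _ (x2 k.+1) (x2 k) (x2 k.-1)).
  by rewrite /delta -/d1 -/d2; lra.
split=> //; split=> // k; apply: le_trans (Th_descent k).
by rewrite leeDl // lee_fin mulr_ge0 ?(ltW delta_gt0) // !addr_ge0 ?sqn_ge0.
Qed.
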